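(* Let $A$ be an implementable allocation rule with interim allocations $x_i$ and interim payments $z_i$. Then for every bidder $i$, the function $b_i^{\mathrm{WPB}}(v_i) := z_i(v_i)/x_i(v_i)$ is monotone non-decreasing on the set $\{v_i \in \mathcal V_i : x_i(v_i) > 0\}$.
   Context: Setting: $n$ risk-neutral unit-demand bidders and $k$ identical items, $1 \le k < n$. Bidder $i$ has private value $v_i \in \mathcal V_i = [0,\bar v_i]$, drawn independently across bidders from a distribution $F_i$ with density $f_i > 0$ on $\mathcal V_i$; $\bm v = (v_1,\dots,v_n)$, $\mathcal V = \prod_i \mathcal V_i$. An allocation rule is a measurable map $A : \mathcal V \to \{0,1\}^n$ with $\sum_i A_i(\bm v) \le k$. Its interim allocation is $x_i(v_i) = \mathbb E[A_i(\bm v) \mid v_i]$, and $A$ is called implementable if every $x_i$ is non-decreasing. Its interim payment function is $z_i(v_i) = v_i x_i(v_i) - \int_0^{v_i} x_i(u)\,du$. *)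

From HB Require Import structures.
From mathcomp Require Import all_boot all_order all_algebra.
From mathcomp Require Import all_classical all_reals all_analysis.
Set Implicit Arguments. Unset Strict Implicit. Unset Printing Implicit Defensive.
Import Order.TTheory GRing.Theory Num.Theory.
Local Open Scope classical_set_scope.
Local Open Scope ring_scope.

(* Value profiles v = (v_1,...,v_n) are n-tuples of reals (n.-tuple R carries
   the product sigma-algebra in MathComp-Analysis). *)

Definition upd (R : realType) (n : nat) (v : n.-tuple R) (j : 'I_n) (u : R)
  : n.-tuple R := [tuple if i == j then u else tnth v i | i < n].

Definition Vset (R : realType) (n : nat) (vbar : 'I_n -> R) (i : 'I_n) : set R :=
  `[0, vbar i].

(* Expectation of g over the coordinates in S, each v_j (j in S) drawn
   independently from the density f j on [0, vbar j]; the other coordinates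
   are taken from v.  (Iterated Lebesgue integrals.) *)
Fixpoint iexp (R : realType) (n : nat) (f : 'I_n -> R -> R) (vbar : 'I_n -> R)
  (S : seq 'I_n) (g : n.-tuple R -> R) (v : n.-tuple R) : R :=
  match S with
  | [::] => g v
  | j :: S' => Rintegral (@lebesgue_measure R) (Vset vbar j)
                 (fun u => f j u * iexp f vbar S' g (upd v j u))
  end.

(* Interim allocation x_i(v_i) = E[A_i(v) | v_i], i.e. the expectation of
   A_i(v_i, v_{-i}) over the independent v_j, j <> i. *)
Definition interim_alloc (R : realType) (n : nat) (f : 'I_n -> R -> R)
  (vbar : 'I_n -> R) (A : n.-tuple R -> 'I_n -> bool) (i : 'I_n) (vi : R) : R :=
  iexp f vbar [seq j <- enum 'I_n | j != i] (fun v => (A v i)%:R)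
    (upd [tuple (0:R) | _ < n] i vi).

Definition interim_pay (R : realType) (n : nat) (f : 'I_n -> R -> R)
  (vbar : 'I_n -> R) (A : n.-tuple R -> 'I_n -> bool) (i : 'I_n) (vi : R) : R :=
  vi * interim_alloc f vbar A i vi
  - Rintegral (@lebesgue_measure R) `[0, vi] (interim_alloc f vbar A i).

Definition implementable (R : realType) (n : nat) (f : 'I_n -> R -> R)
  (vbar : 'I_n -> R) (A : n.-tuple R -> 'I_n -> bool) : Prop :=
  forall i a b, a \in Vset vbar i -> b \in Vset vbar i -> a <= b ->
    interim_alloc f vbar A i a <= interim_alloc f vbar A i b.

From HB Require Import structures.
From mathcomp Require Import all_boot all_order all_algebra.
From mathcomp Require Import all_classical all_reals all_analysis.
From mathcomp Require Import lra measurable_realfun.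
Import Order.TTheory GRing.Theory Num.Theory.

(* Writing I(v) = \int_0^v x_i, the bid is z_i(v)/x_i(v) = v - I(v)/x_i(v).
   For a <= b, monotonicity of x_i gives I(b) - I(a) <= x_i(b) (b - a) and
   I(a)/x_i(b) <= I(a)/x_i(a), so the subtracted term grows by at most b - a.
   Besides monotonicity of x_i, which alone makes x_i integrable on [0, b],
   only the nonnegativity of the densities is used. *)

Local Open Scope classical_set_scope.
Local Open Scope ring_scope.

Lemma lebesgue_measure_itv_lty {R : realType} (x y : R) (b0 b1 : bool) :
  (@lebesgue_measure R [set` Interval (BSide b0 x) (BSide b1 y)] < +oo)%E.
Proof. by rewrite lebesgue_measure_itv; case: ifP => _; rewrite ?ltry. Qed.

Section nondecreasing_on_itv.
Context {R : realType} (c b : R) (X : R -> R).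
Notation mu := (@lebesgue_measure R).
Hypothesis X_nd : {in `[c, b] &, {homo X : x y / x <= y}}.

Let cb_in u : c <= b -> c <= u -> u <= b -> u \in `[c, b].
Proof. by move=> *; rewrite in_itv /=; apply/andP. Qed.

Lemma nondecreasing_itv_measurable : measurable_fun `[c, b] X.
Proof.
have [cb|bc] := leP c b; last first.
  by rewrite set_itv_ge ?bnd_simp -?ltNge //; exact: measurable_fun_set0.
pose clamp u := Num.min (Num.max u c) b.
have clamp_in u : clamp u \in `[c, b].
  by apply: cb_in => //; rewrite ?le_min ?le_max ?lexx ?cb ?orbT // ge_min lexx orbT.
have clamp_id u : u \in `[c, b] -> clamp u = u.
  by rewrite in_itv /= => /andP[cu ub]; rewrite /clamp (max_idPl cu) (min_idPl ub).
apply: (eq_measurable_fun (X \o clamp)).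
  by move=> u; rewrite inE /= => uI; rewrite /= clamp_id.
apply: nondecreasing_measurable => // u w uw; apply: X_nd => //.
by rewrite /clamp; apply: le_min2 => //; apply: le_max2.
Qed.

Lemma nondecreasing_itv_integrable : mu.-integrable `[c, b] (EFin \o X).
Proof.
apply: measurable_bounded_integrable.
- exact: measurable_itv.
- exact: lebesgue_measure_itv_lty.
- exact: nondecreasing_itv_measurable.
rewrite /bounded_near; near=> M => u /= uI.
have [cu ub] : c <= u /\ u <= b by move: uI; rewrite in_itv /= => /andP.
have Xcu : X c <= X u by apply: X_nd => //; apply: cb_in => //; apply: le_trans ub.
have Xub : X u <= X b by apply: X_nd => //; apply: cb_in => //; apply: le_trans ub.
apply: le_trans (_ : `|X c| + `|X b| <= M); last first.
  by near: M; apply: nbhs_pinfty_ge; rewrite num_real.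
have := ler_norm (X b); have := normr_ge0 (X b); have := normr_ge0 (X c).
have := ler_norm (- X c); rewrite normrN => *.
rewrite ler_norml; apply/andP; split; lra.
Unshelve. all: by end_near.
Qed.

Lemma Rintegral_itv_nondecreasing_incr (a : R) : c <= a -> a <= b ->
  \int[mu]_(x in `[c, b]) X x - \int[mu]_(x in `[c, a]) X x <= X b * (b - a).
Proof.
move=> ca ab; have cb := le_trans ca ab.
have Xab u : u \in `]a, b] -> X u <= X b.
  rewrite in_itv /= => /andP[au ub]; apply: X_nd => //; apply: cb_in => //.
  exact: le_trans (ltW au).
rewrite (Rintegral_itvB nondecreasing_itv_integrable) ?bnd_simp //.
have abS : `]a, b] `<=` (`[c, b] : set R).
  by move=> u /=; rewrite !in_itv /= => /andP[au ->]; rewrite (le_trans ca (ltW au)).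
apply: le_trans (_ : \int[mu]_(x in `]a, b]) X b <= _).
  apply: le_Rintegral => //; first exact: integrableS nondecreasing_itv_integrable.
  exact: measurable_bounded_integrable (lebesgue_measure_itv_lty _ _ _ _) _ (bounded_cst _ _).
rewrite Rintegral_cst //; have := lebesgue_measure_itv `]a, b]; rewrite /= => ->.
rewrite lte_fin; case: ltP => //= ba.
by rewrite (_ : b - a = 0) // ; apply/eqP; rewrite subr_eq0 eq_le ba ab.
Qed.

End nondecreasing_on_itv.

Lemma ler_sub_ratio (R : realFieldType) (a b Xa Xb Ia Ib : R) :
  0 < Xa -> Xa <= Xb -> 0 <= Ia -> Ib - Ia <= Xb * (b - a) ->
  (a * Xa - Ia) / Xa <= (b * Xb - Ib) / Xb.
Proof.
move=> Xa_gt0 XaXb Ia_ge0 dI; have Xb_gt0 := lt_le_trans Xa_gt0 XaXb.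
rewrite !mulrBl -!mulrA !divff ?gt_eqF // !mulr1.
have IaXb : Ia / Xb <= Ia / Xa by rewrite ler_wpM2l // lef_pV2 ?posrE.
have IbXb : Ib / Xb <= Ia / Xb + (b - a).
  rewrite ler_pdivrMr // mulrDl divfK ?gt_eqF //; lra.
lra.
Qed.

Lemma iexp_ge0 (R : realType) (n : nat) (f : 'I_n -> R -> R) (vbar : 'I_n -> R)
    (S : seq 'I_n) (g : n.-tuple R -> R) :
  (forall i u, u \in Vset vbar i -> 0 <= f i u) -> (forall v, 0 <= g v) ->
  forall v, 0 <= iexp f vbar S g v.
Proof.
move=> f_ge0 g_ge0; elim: S => [|j S IH] v /=; first exact: g_ge0.
by apply: Rintegral_ge0 => u uV; rewrite mulr_ge0 // f_ge0 // inE.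
Qed.

Lemma interim_alloc_ge0 (R : realType) (n : nat) (f : 'I_n -> R -> R)
    (vbar : 'I_n -> R) (A : n.-tuple R -> 'I_n -> bool) (i : 'I_n) (vi : R) :
  (forall j u, u \in Vset vbar j -> 0 <= f j u) -> 0 <= interim_alloc f vbar A i vi.
Proof. by move=> f_ge0; apply: iexp_ge0 => // v; rewrite ler0n. Qed.

Theorem mainTheorem1 (R : realType) (n k : nat)
  (vbar : 'I_n -> R) (f : 'I_n -> R -> R) (A : n.-tuple R -> 'I_n -> bool) :
  (1 <= k < n)%N ->
  (forall i, 0 < vbar i) ->
  (* f i is a density of F_i, positive on V_i *)
  (forall i, measurable_fun (Vset vbar i) (f i)) ->
  (forall i u, u \in Vset vbar i -> 0 < f i u) ->
  (forall i, (\int[@lebesgue_measure R]_(u in Vset vbar i) (f i u)%:E = 1)%E) ->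
  (* A is a measurable allocation rule allocating at most k items *)
  (forall i, measurable [set v : n.-tuple R | A v i]) ->
  (forall v : n.-tuple R, (forall i, tnth v i \in Vset vbar i) ->
     (\sum_(i < n) (A v i : nat) <= k)%N) ->
  implementable f vbar A ->
  forall (i : 'I_n) (a b : R),
    a \in Vset vbar i -> b \in Vset vbar i ->
    0 < interim_alloc f vbar A i a -> 0 < interim_alloc f vbar A i b ->
    a <= b ->
    interim_pay f vbar A i a / interim_alloc f vbar A i a
      <= interim_pay f vbar A i b / interim_alloc f vbar A i b.
Proof.
move=> _ _ _ f_gt0 _ _ _ A_impl i a b aV bV Xa_gt0 _ ab.
have f_ge0 j u : u \in Vset vbar j -> 0 <= f j u by move/f_gt0/ltW.
set X := interim_alloc f vbar A i.
move: aV bV; rewrite !inE /Vset /= !in_itv /= => /andP[a_ge0 _] /andP[_ b_le].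
have X_nd : {in `[0, b] &, {homo X : u w / u <= w}}.
  move=> u w; rewrite !in_itv /= => /andP[u_ge0 ub] /andP[w_ge0 wb].
  by apply: A_impl; rewrite // inE /Vset /= in_itv /= ?u_ge0 ?w_ge0 (le_trans _ b_le).
rewrite /interim_pay -/X; apply: ler_sub_ratio => //.
- by apply: X_nd; rewrite // in_itv /= ?a_ge0 ?ab ?(le_trans a_ge0 ab) ?lexx.
- by apply: Rintegral_ge0 => u _; apply: interim_alloc_ge0.
- exact: Rintegral_itv_nondecreasing_incr.
Qed.
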